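(* Let $\|\cdot\|$ be any norm on $\mathbb{R}^d$. Suppose $\mathcal{S}$ is a finite collection of subsets of $\mathbb{R}^d$, each with at least $2$ elements, and let $\mathcal{H}(\mathcal{S})=(\mathbb{R}^d,E(\mathcal{S}))$ where $E(\mathcal{S})=\{T\subseteq\mathbb{R}^d \mid T \text{ is congruent in } (\mathbb{R}^d,\|\cdot\|) \text{ to some } S\in\mathcal{S}\}$. Then $\chi(\mathcal{H}(\mathcal{S}))<\infty$.
   Context: Two sets $X,Y\subseteq\mathbb{R}^d$ are congruent in $(\mathbb{R}^d,\|\cdot\|)$ iff one is the image of the other under a composition, in either order, of a surjective linear isometry of $(\mathbb{R}^d,\|\cdot\|)$ and a translation. A hypergraph $(V,E)$ has edges that are subsets of $V$ of size at least $2$; a proper coloring makes no edge monochromatic; $\chi$ is the least number of colors in a proper coloring. *)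

From HB Require Import structures.
From mathcomp Require Import all_boot all_order all_algebra.
From mathcomp Require Import reals.
Set Implicit Arguments. Unset Strict Implicit. Unset Printing Implicit Defensive.
Import Order.TTheory GRing.Theory Num.Theory.
Local Open Scope ring_scope.

Definition is_norm (R : realType) (d : nat) (N : 'rV[R]_d -> R) : Prop :=
  [/\ forall x, N x = 0 -> x = 0,
      forall (a : R) x, N (a *: x) = `|a| * N x &
      forall x y, N (x + y) <= N x + N y].

Definition lin_isometry (R : realType) (d : nat) (N : 'rV[R]_d -> R)
    (f : 'rV[R]_d -> 'rV[R]_d) : Prop :=
  [/\ forall (a : R) x y, f (a *: x + y) = a *: f x + f y,
      forall y, exists x, f x = y &
      forall x, N (f x) = N x].

Definition img (T U : Type) (f : T -> U) (X : T -> Prop) : U -> Prop :=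
  fun y => exists2 x, X x & f x = y.

Definition congruent (R : realType) (d : nat) (N : 'rV[R]_d -> R)
    (X Y : 'rV[R]_d -> Prop) : Prop :=
  exists f t, lin_isometry N f /\
    ((forall y, Y y <-> img (fun x => f (x + t)) X y) \/
     (forall y, Y y <-> img (fun x => f x + t) X y)).

(* The finite collection S is given as a family SS indexed by 'I_n.
   Edges of H(S): subsets congruent to some member of the collection. *)
Definition edgeS (R : realType) (d : nat) (N : 'rV[R]_d -> R)
    (n : nat) (SS : 'I_n -> ('rV[R]_d -> Prop)) (T : 'rV[R]_d -> Prop) : Prop :=
  exists i, congruent N (SS i) T.

Definition proper_coloring (V : Type) (E : (V -> Prop) -> Prop) (k : nat)
    (c : V -> 'I_k) : Prop :=
  forall T, E T -> ~ (exists col : 'I_k, forall x, T x -> c x = col).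

Definition finite_chromatic (V : Type) (E : (V -> Prop) -> Prop) : Prop :=
  exists k (c : V -> 'I_k), proper_coloring E c.

From HB Require Import structures.
From mathcomp Require Import all_boot all_order all_algebra.
From mathcomp Require Import reals.
From mathcomp Require Import all_classical all_analysis.
From mathcomp Require Import lra.
Import Order.TTheory GRing.Theory Num.Theory.
Import numFieldNormedType.Exports.
Set Implicit Arguments. Unset Strict Implicit. Unset Printing Implicit Defensive.
Local Open Scope classical_set_scope.
Local Open Scope ring_scope.

(* All norms on R^d are equivalent to the sup norm, so for 0 < a and any b
   there is a finite colouring in which two points of the same colour are at
   distance < a or > b: colour x by the residues mod p of the indices of the
   cells of a fine grid containing its coordinates.  Each member of the
   collection contains a pair of points at some positive distance; with a below
   all these distances and b above them, no congruent copy of a member, which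
   contains a pair at the same distance, is monochromatic. *)

Definition gap_coloring (R : numDomainType) (V : Type) (k : nat)
    (dist : V -> V -> R) (a b : R) (c : V -> 'I_k) : Prop :=
  forall x y, c x = c y -> dist x y < a \/ b < dist x y.

Lemma dvdz_le_norm (p : nat) (m : int) : m != 0 -> (p %| m)%Z -> p%:Z <= `|m|.
Proof.
move=> m0 /dvdn_leq; rewrite absz_gt0 => /(_ m0).
by rewrite -lez_nat abszE.
Qed.

Section RealLine.
Variable R : realType.

Lemma floorB_dist_lt1 (x y : R) : `|x - y - (Num.floor x - Num.floor y)%:~R| < 1.
Proof.
have /andP[lex ltx] := floor_itv x; have /andP[ley lty] := floor_itv y.
rewrite intrD in ltx lty; rewrite intrB ltr_norml; apply/andP; split; lra.
Qed.

Lemma gap_coloring_real (s K : R) : 0 < s ->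
  exists k (c : R -> 'I_k), gap_coloring (fun u v => `|u - v|) s K c.
Proof.
move=> s0; pose p := (Num.truncn (K / s)).+2.
pose fl u := Num.floor (u / s).
exists p, (fun u => inord (absz (fl u %% p)%Z)) => u v /= cuv.
have p_dvd : (p %| fl u - fl v)%Z.
  have mod_lt w : (absz (fl w %% p)%Z < p)%N.
    by rewrite -ltz_nat abszE ger0_norm ?modz_ge0 ?ltz_pmod.
  rewrite -eqz_mod_dvd; apply/eqP.
  move/(congr1 val): cuv; rewrite /= !inordK // => /(congr1 Posz).
  by rewrite !abszE !ger0_norm ?modz_ge0.
have huv := floorB_dist_lt1 (u / s) (v / s); rewrite -/(fl u) -/(fl v) in huv.
have -> : `|u - v| = s * `|u / s - v / s|.
  rewrite -mulrBl normrM (gtr0_norm (x := s^-1)) ?invr_gt0 //.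
  by rewrite mulrCA mulfV ?gt_eqF ?mulr1.
have [e|ne] := eqVneq (fl u) (fl v).
  left; rewrite e subrr mulr0z subr0 in huv.
  by rewrite -ltr_pdivlMl // mulVf ?gt_eqF.
(* Distinct cells with the same residue are at least p cells apart,
   and p - 1 > K / s. *)
right; rewrite -ltr_pdivrMl // [_ * K]mulrC.
have := dvdz_le_norm (p := p) (m := fl u - fl v).
rewrite subr_eq0 => /(_ ne p_dvd).
rewrite -(ler_int R) intr_norm -pmulrn -natr1.
have := ler_distD (u / s - v / s) ((fl u - fl v)%:~R) 0.
rewrite !subr0 (distrC ((fl u - fl v)%:~R)).
have := truncnS_gt (K / s); lra.
Qed.
End RealLine.

Section RowVectors.
Variables (R : realType) (d : nat).

Lemma coord_le_mx_norm (v : 'rV[R]_d) j : `|v ord0 j| <= `|v|.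
Proof.
change (`|v ord0 j| <= mx_norm v); rewrite mx_normrE.
exact: (le_bigmax _ (fun ij : 'I_1 * 'I_d => `|v ij.1 ij.2|) (ord0, j)).
Qed.

Lemma mx_norm_lt (v : 'rV[R]_d) e :
  0 < e -> (forall j, `|v ord0 j| < e) -> `|v| < e.
Proof.
move=> e0 ve; change (mx_norm v < e); rewrite mx_normrE.
by apply: bigmax_lt => // -[i j] _; rewrite /= (ord1 i).
Qed.

Lemma gap_coloring_row k (c : R -> 'I_k) (s K : R) : 0 < s ->
  gap_coloring (fun u v => `|u - v|) s K c ->
  gap_coloring (fun x y : 'rV[R]_d => `|x - y|) s K
    (fun x => enum_rank [ffun j => c (x ord0 j)]).
Proof.
move=> s0 gap_c x y /enum_rank_inj/ffunP cxy.
have [far|not_far] := pselect (exists j, K < `|(x - y) ord0 j|).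
  by right; have [j /lt_le_trans] := far; apply; exact: coord_le_mx_norm.
left; apply: (mx_norm_lt s0) => j; rewrite !mxE.
have := cxy j; rewrite !ffunE => /gap_c [] // Kj.
by exfalso; apply: not_far; exists j; rewrite !mxE.
Qed.
End RowVectors.

Section Norm.
Variables (R : realType) (d : nat) (N : 'rV[R]_d -> R).
Hypothesis N_norm : is_norm N.

Lemma is_norm0 : N 0 = 0.
Proof.
by case: N_norm => _ normZ _; rewrite -(scale0r 0) normZ normr0 mul0r.
Qed.

Lemma is_normN x : N (- x) = N x.
Proof.
by case: N_norm => _ normZ _; rewrite -scaleN1r normZ normrN normr1 mul1r.
Qed.

Lemma is_norm_ge0 x : 0 <= N x.
Proof.
case: N_norm => _ _ normD.
have := normD x (- x); rewrite subrr is_norm0 is_normN; lra.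
Qed.

Lemma is_norm_gt0 x : x != 0 -> 0 < N x.
Proof.
move=> x0; rewrite lt_def is_norm_ge0 andbT.
by apply: contraNneq x0; case: N_norm => N0 _ _ /N0 ->.
Qed.

Lemma is_norm_sum (I : Type) (r : seq I) (F : I -> 'rV[R]_d) :
  N (\sum_(i <- r) F i) <= \sum_(i <- r) N (F i).
Proof.
case: N_norm => _ _ normD.
elim: r => [|i r IH]; first by rewrite !big_nil is_norm0.
by rewrite !big_cons; apply: le_trans (normD _ _) _; rewrite lerD2l.
Qed.

Lemma is_norm_le_mx_norm : exists2 C, 0 < C & forall v, N v <= C * `|v|.
Proof.
exists (\sum_(j < d) N (delta_mx 0 j) + 1) => [|v].
  by rewrite ltr_wpDl // sumr_ge0 // => j _; exact: is_norm_ge0.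
rewrite {1}(row_sum_delta v) mulrDl mul1r mulr_suml.
apply: le_trans (is_norm_sum _ _) _; rewrite ler_wpDr //.
apply: ler_sum => j _; case: N_norm => _ normZ _; rewrite normZ mulrC.
by apply: ler_wpM2l; [exact: is_norm_ge0 | exact: coord_le_mx_norm].
Qed.

Lemma is_norm_continuous : continuous N.
Proof.
have [C C0 NC] := is_norm_le_mx_norm.
case: N_norm => _ _ normD.
move=> x; apply/(cvgrPdist_lt (FF := nbhs_filter x)) => e e0.
near=> y.
have dist_le : `|N x - N y| <= N (x - y).
  have := normD (x - y) y; have := normD (y - x) x.
  rewrite !subrK -opprB is_normN ler_norml; lra.
apply: (le_lt_trans dist_le); apply: (le_lt_trans (NC _)).
rewrite -ltr_pdivlMl //; near: y.
by apply: cvgr_dist_lt; [exact: cvg_id | rewrite mulr_gt0 ?invr_gt0].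
Unshelve. all: by end_near.
Qed.

Lemma mx_norm_le_is_norm : exists2 m, 0 < m & forall v, m * `|v| <= N v.
Proof.
pose S := [set v : 'rV[R]_d | `|v| = 1].
have S_normalize v : v != 0 -> S (`|v|^-1 *: v).
  by move=> v0; rewrite /S /= normrZ normfV normr_id mulVf ?normr_eq0.
have lb_on_S m : (forall w, S w -> m <= N w) -> forall v, m * `|v| <= N v.
  move=> mS v; have [->|v0] := eqVneq v 0.
    by rewrite normr0 mulr0 is_norm0.
  have := mS _ (S_normalize v v0); case: N_norm => _ normZ _.
  by rewrite normZ normfV normr_id ler_pdivlMl ?normr_gt0 // mulrC.
have [[w Sw]|S0] := pselect (S !=set0); last first.
  (* S is empty only for d = 0, where every vector is 0. *)
  by exists 1 => //; apply: lb_on_S => w Sw; exfalso; apply: S0; exists w.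
have S_compact : compact S.
  apply: bounded_closed_compact.
    by exists 1; split; [rewrite num_real | move=> M M1 v /= ->; exact: ltW].
  exact: (proj1 (continuous_closedP _) (@norm_continuous _ _))
    _ (@closed_eq _ 1).
have [c Sc minc] := EVT_min_rV (ex_intro _ w Sw) S_compact
  (continuous_subspaceT is_norm_continuous).
exists (N c); last by apply: lb_on_S => v Sv; apply: minc; rewrite inE.
apply: is_norm_gt0; apply: contraTneq Sc => ->.
by rewrite notin_setE /S /= normr0 => /esym/eqP; rewrite oner_eq0.
Qed.

Lemma gap_coloring_norm (a b : R) : 0 < a ->
  exists k (c : 'rV[R]_d -> 'I_k), gap_coloring (fun x y => N (x - y)) a b c.
Proof.
move=> a0; have [C C0 NC] := is_norm_le_mx_norm.
have [m m0 mN] := mx_norm_le_is_norm.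
have [k [c gap_c]] := gap_coloring_real (b / m) (divr_gt0 a0 C0).
exists _, (fun x => enum_rank [ffun j => c (x ord0 j)]).
move=> x y /(gap_coloring_row (divr_gt0 a0 C0) gap_c) [near_xy|far_xy].
  by left; apply: le_lt_trans (NC _) _; rewrite -ltr_pdivlMl // mulrC.
by right; apply: lt_le_trans (mN _); rewrite -ltr_pdivrMl // mulrC.
Qed.
End Norm.

Lemma lin_isometryB (R : realType) (d : nat) (N : 'rV[R]_d -> R) f p q :
  lin_isometry N f -> f p - f q = f (p - q).
Proof.
case=> f_lin _ _.
by rewrite addrC -scaleN1r -f_lin scaleN1r addrC.
Qed.

Lemma congruent_dist (R : realType) (d : nat) (N : 'rV[R]_d -> R) X Y x y :
  congruent N X Y -> X x -> X y ->
  exists u v, [/\ Y u, Y v & N (u - v) = N (x - y)].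
Proof.
move=> [f [t [f_iso Y_img]]] Xx Xy; have [_ _ f_isoN] := f_iso.
case: Y_img => Y_img;
  [exists (f (x + t)), (f (y + t)) | exists (f x + t), (f y + t)];
  (split; [by apply/Y_img; exists x | by apply/Y_img; exists y |]).
- by rewrite (lin_isometryB _ _ f_iso) f_isoN opprD addrACA subrr addr0.
- by rewrite opprD addrACA subrr addr0 (lin_isometryB _ _ f_iso) f_isoN.
Qed.

Theorem lemma4p2 (R : realType) (d : nat) (N : 'rV[R]_d -> R)
    (n : nat) (SS : 'I_n -> ('rV[R]_d -> Prop)) :
  is_norm N ->
  (forall i, exists x y, SS i x /\ SS i y /\ x <> y) ->
  finite_chromatic (edgeS N SS).
Proof.
move=> N_norm SS_pair.
have dist_SS i :
    exists r, 0 < r /\ exists x y, [/\ SS i x, SS i y & N (x - y) = r].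
  have [x [y [SSx [SSy xy]]]] := SS_pair i.
  exists (N (x - y)); split; last by exists x, y.
  by apply: is_norm_gt0; rewrite // subr_eq0; apply/eqP.
have [r r_dist] := choice dist_SS.
pose a := \big[Order.min/1]_i r i; pose b := \big[Order.max/0]_i r i.
have a0 : 0 < a by apply: lt_bigmin => // i _; case: (r_dist i).
have [k [c gap_c]] := gap_coloring_norm N_norm b a0.
exists k, c => T [i SS_T] [col T_col].
have [_ [x [y [SSx SSy xy_r]]]] := r_dist i.
have [u [v [Tu Tv uv_xy]]] := congruent_dist SS_T SSx SSy.
have := gap_c u v; rewrite (T_col u Tu) (T_col v Tv) uv_xy xy_r => /(_ erefl).
by case=> /lt_geF; [rewrite bigmin_le | rewrite le_bigmax].
Qed.
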